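(* In the setting where $f(x,y)=(ax+by-\lfloor ax+by\rfloor,\ cx+dy-\lfloor cx+dy\rfloor)$ on $[0,1)^2$, $M=\begin{pmatrix}a&b\\c&d\end{pmatrix}$ has a real eigenvalue with eigenvector $(\tau,1)^T$, $\tau\neq0$, and $d\tau-b\neq 0$ with $\left|\frac{\tau}{d\tau-b}\right|<1$: for every $(x_0,y_0)\in[0,1)^2$ and every $n\ge0$, $$\gamma_n=-\frac{1}{\tau}\sum_{j\ge 0}\left(\frac{\tau}{d\tau-b}\right)^{j+1}s_{n+j}+\sum_{j\ge 0}\left(\frac{\tau}{d\tau-b}\right)^{j+1}t_{n+j},$$ where $(x_n,y_n)=f^n(x_0,y_0)$, $s_n=\lfloor ax_n+by_n\rfloor$, $t_n=\lfloor cx_n+dy_n\rfloor$, and $\gamma_n=y_n-\frac1\tau x_n$.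
   Context: $f$ is the linear map of $M$ followed by reduction mod 1 in each coordinate; $(s_n,t_n)$ is the integer code of the $n$-th iterate so that $x_{n+1}=ax_n+by_n-s_n$, $y_{n+1}=cx_n+dy_n-t_n$. *)

From Stdlib Require Import Reals.
From Coquelicot Require Import Coquelicot.
Open Scope R_scope.

(* floor of a real number: Int_part x = up x - 1 is the integer floor *)
Definition floorR (x : R) : R := IZR (Int_part x).

Definition fmap (a b c d : R) (p : R * R) : R * R :=
  let (x, y) := p in
  (a * x + b * y - floorR (a * x + b * y),
   c * x + d * y - floorR (c * x + d * y)).

Fixpoint orbit (a b c d x0 y0 : R) (n : nat) : R * R :=
  match n with
  | O => (x0, y0)
  | S m => fmap a b c d (orbit a b c d x0 y0 m)
  end.

Definition xn a b c d x0 y0 n := fst (orbit a b c d x0 y0 n).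
Definition yn a b c d x0 y0 n := snd (orbit a b c d x0 y0 n).

Definition sn a b c d x0 y0 n :=
  floorR (a * xn a b c d x0 y0 n + b * yn a b c d x0 y0 n).
Definition tn a b c d x0 y0 n :=
  floorR (c * xn a b c d x0 y0 n + d * yn a b c d x0 y0 n).

Definition gamman a b c d x0 y0 tau n :=
  yn a b c d x0 y0 n - (1 / tau) * xn a b c d x0 y0 n.

From Stdlib Require Import Reals Lra Lia.
From Coquelicot Require Import Coquelicot.
Open Scope R_scope.

(* Writing [mu = tau / (d tau - b)], the eigenvector relations turn one step of the
   map into the backward recurrence
     [gamma_k = mu gamma_(k+1) + mu (t_k - s_k / tau)],
   because the linear part of [gamma_(k+1)] is [(d - b / tau) gamma_k = gamma_k / mu].
   Unrolling it [N] times leaves the remainder [mu^N gamma_(n+N)], which vanishes as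
   [gamma] is bounded on the unit square and [|mu| < 1]; the same bound makes the
   series of the integer codes converge separately. *)

Lemma is_lim_seq_geom_bounded (mu K : R) (h : nat -> R) :
  Rabs mu < 1 -> (forall N, Rabs (h N) <= K) ->
  is_lim_seq (fun N => mu ^ N * h N) 0.
Proof.
  intros Hmu Hh. apply is_lim_seq_abs_0.
  apply is_lim_seq_le_le with (fun _ => 0) (fun N => K * Rabs mu ^ N).
  - intros N. split; [apply Rabs_pos|].
    rewrite Rabs_mult, <- RPow_abs, Rmult_comm.
    apply Rmult_le_compat_r; [apply pow_le, Rabs_pos | apply Hh].
  - apply is_lim_seq_const.
  - replace (Finite 0) with (Rbar_mult K 0) by (simpl; f_equal; ring).
    apply is_lim_seq_scal_l, is_lim_seq_geom. now rewrite Rabs_Rabsolu.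
Qed.

Lemma ex_series_geom_bounded (mu K : R) (f : nat -> R) :
  Rabs mu < 1 -> (forall j, Rabs (f j) <= K) ->
  ex_series (fun j => mu ^ (j + 1) * f j).
Proof.
  intros Hmu Hf.
  apply (@ex_series_le R_AbsRing R_CompleteNormedModule _
           (fun j => (K * Rabs mu) * Rabs mu ^ j)).
  - intros j. change norm with Rabs. simpl.
    rewrite Rabs_mult, <- RPow_abs, Nat.add_1_r. simpl.
    assert (0 <= Rabs mu * Rabs mu ^ j)
      by (apply Rmult_le_pos; [apply Rabs_pos | apply pow_le, Rabs_pos]).
    specialize (Hf j). nra.
  - apply (ex_series_scal_l (K * Rabs mu) (fun j => Rabs mu ^ j)).
    eexists. apply is_series_geom. now rewrite Rabs_Rabsolu.
Qed.

Lemma is_series_backward_recurrence (mu K : R) (g e : nat -> R) :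
  Rabs mu < 1 -> (forall k, Rabs (g k) <= K) ->
  (forall k, g k = mu * g (S k) + mu * e k) ->
  forall n, is_series (fun j => mu ^ (j + 1) * e (n + j)%nat) (g n).
Proof.
  intros Hmu Hg Hrec n.
  assert (Hpartial : forall N,
    sum_n (fun j => mu ^ (j + 1) * e (n + j)%nat) N
    = g n - mu ^ S N * g (n + S N)%nat).
  { induction N as [|N IH].
    - rewrite sum_O, (Hrec n), Nat.add_1_r, Nat.add_0_r, Nat.add_1_r. simpl; ring.
    - rewrite sum_Sn, IH, (Hrec (n + S N)%nat). change plus with Rplus.
      replace (S (n + S N)) with (n + S (S N))%nat by lia.
      rewrite Nat.add_1_r. simpl. ring. }
  change (is_lim_seq (sum_n (fun j => mu ^ (j + 1) * e (n + j)%nat)) (g n)).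
  apply is_lim_seq_ext with (fun N => g n - mu ^ S N * g (n + S N)%nat).
  { intros N. symmetry. apply Hpartial. }
  replace (Finite (g n)) with (Rbar_minus (g n) 0) by (simpl; f_equal; ring).
  apply is_lim_seq_minus'; [apply is_lim_seq_const|].
  apply (is_lim_seq_incr_1 (fun N => mu ^ N * g (n + N)%nat)).
  now apply is_lim_seq_geom_bounded with K.
Qed.

Lemma floorR_bounds (z : R) : floorR z <= z < floorR z + 1.
Proof. unfold floorR. destruct (base_Int_part z). lra. Qed.

Lemma Rabs_floorR_le (z : R) : Rabs (floorR z) <= Rabs z + 1.
Proof.
  pose proof (floorR_bounds z). unfold Rabs. repeat destruct Rcase_abs; lra.
Qed.

Lemma Rabs_lin_comb_unit_le (p q x y : R) :
  0 <= x < 1 -> 0 <= y < 1 -> Rabs (p * x + q * y) <= Rabs p + Rabs q.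
Proof.
  intros Hx Hy. eapply Rle_trans; [apply Rabs_triang|].
  rewrite !Rabs_mult, (Rabs_right x), (Rabs_right y) by lra.
  pose proof (Rabs_pos p). pose proof (Rabs_pos q). nra.
Qed.

Section Orbit.

Variables a b c d x0 y0 : R.

Lemma orbit_step (k : nat) :
  xn a b c d x0 y0 (S k)
    = a * xn a b c d x0 y0 k + b * yn a b c d x0 y0 k - sn a b c d x0 y0 k /\
  yn a b c d x0 y0 (S k)
    = c * xn a b c d x0 y0 k + d * yn a b c d x0 y0 k - tn a b c d x0 y0 k.
Proof.
  unfold sn, tn, xn, yn. simpl.
  destruct (orbit a b c d x0 y0 k) as [x y]. now split.
Qed.

Hypotheses (Hx0 : 0 <= x0 < 1) (Hy0 : 0 <= y0 < 1).

Lemma orbit_in_unit_square (k : nat) :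
  0 <= xn a b c d x0 y0 k < 1 /\ 0 <= yn a b c d x0 y0 k < 1.
Proof.
  destruct k as [|k]; [unfold xn, yn; simpl; auto|].
  destruct (orbit_step k) as [-> ->]. unfold sn, tn.
  pose proof (floorR_bounds (a * xn a b c d x0 y0 k + b * yn a b c d x0 y0 k)).
  pose proof (floorR_bounds (c * xn a b c d x0 y0 k + d * yn a b c d x0 y0 k)).
  lra.
Qed.

Lemma Rabs_floor_orbit_le (p q : R) (k : nat) :
  Rabs (floorR (p * xn a b c d x0 y0 k + q * yn a b c d x0 y0 k))
    <= Rabs p + Rabs q + 1.
Proof.
  destruct (orbit_in_unit_square k) as [Hx Hy].
  eapply Rle_trans; [apply Rabs_floorR_le|].
  pose proof (Rabs_lin_comb_unit_le p q _ _ Hx Hy). lra.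
Qed.

Lemma Rabs_gamman_le (tau : R) (k : nat) :
  Rabs (gamman a b c d x0 y0 tau k) <= 1 + Rabs (1 / tau).
Proof.
  destruct (orbit_in_unit_square k) as [Hx Hy]. unfold gamman.
  eapply Rle_trans; [apply Rabs_triang|].
  rewrite Rabs_Ropp, Rabs_mult, (Rabs_right (xn _ _ _ _ _ _ k)),
    (Rabs_right (yn _ _ _ _ _ _ k)) by lra.
  pose proof (Rabs_pos (1 / tau)). nra.
Qed.

End Orbit.

Lemma gamman_backward_step (a b c d tau lam x0 y0 : R) (k : nat) :
  a * tau + b = lam * tau -> c * tau + d = lam ->
  tau <> 0 -> d * tau - b <> 0 ->
  gamman a b c d x0 y0 tau k
  = tau / (d * tau - b) * gamman a b c d x0 y0 tau (S k)
    + tau / (d * tau - b)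
      * (tn a b c d x0 y0 k - sn a b c d x0 y0 k / tau).
Proof.
  intros Heig1 Heig2 Htau Hden. unfold gamman.
  destruct (orbit_step a b c d x0 y0 k) as [-> ->].
  assert (Hc : c = (lam - d) / tau) by (field_simplify_eq; lra).
  assert (Ha : a = lam - b / tau) by (field_simplify_eq; lra).
  rewrite Hc, Ha. field. now split.
Qed.

Theorem mainTheorem2 (a b c d tau lam : R)
  (Heig1 : a * tau + b * 1 = lam * tau)
  (Heig2 : c * tau + d * 1 = lam * 1)
  (Htau : tau <> 0)
  (Hden : d * tau - b <> 0)
  (Hmu : Rabs (tau / (d * tau - b)) < 1)
  (x0 y0 : R) (Hx0 : 0 <= x0 < 1) (Hy0 : 0 <= y0 < 1) (n : nat) :
  exists S T : R,
    is_series (fun j : nat => (tau / (d * tau - b)) ^ (j + 1) * sn a b c d x0 y0 (n + j)) S /\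
    is_series (fun j : nat => (tau / (d * tau - b)) ^ (j + 1) * tn a b c d x0 y0 (n + j)) T /\
    gamman a b c d x0 y0 tau n = - (1 / tau) * S + T.
Proof.
  set (mu := tau / (d * tau - b)).
  set (s := sn a b c d x0 y0). set (t := tn a b c d x0 y0).
  destruct (ex_series_geom_bounded mu (Rabs a + Rabs b + 1) (fun j => s (n + j)%nat))
    as [Ss HS]; [exact Hmu | intros j; now apply Rabs_floor_orbit_le|].
  destruct (ex_series_geom_bounded mu (Rabs c + Rabs d + 1) (fun j => t (n + j)%nat))
    as [St HT]; [exact Hmu | intros j; now apply Rabs_floor_orbit_le|].
  exists Ss, St. repeat split; [exact HS | exact HT|].
  assert (Hstep : forall k, gamman a b c d x0 y0 tau k
    = mu * gamman a b c d x0 y0 tau (S k) + mu * (t k - s k / tau)).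
  { intros k. apply gamman_backward_step with lam; lra. }
  assert (Hgamma := is_series_backward_recurrence mu (1 + Rabs (1 / tau)) _ _ Hmu
    (Rabs_gamman_le a b c d x0 y0 Hx0 Hy0 tau) Hstep n).
  assert (Hcodes := is_series_minus _ _ _ _ HT (is_series_scal_l (1 / tau) _ _ HS)).
  apply is_series_unique in Hgamma, Hcodes. rewrite <- Hgamma.
  erewrite Series_ext; [rewrite Hcodes; cbn; ring|].
  intros j. cbn. field. exact Htau.
Qed.
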